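(* Let $\mathcal I,\mathcal J$ be ideals on $\omega$ with $\mathcal I\subseteq\mathcal J$. For every cardinal $\kappa$ there exists a Hausdorff compact (hence normal) space $X$ with $|X|=\kappa$ such that for every sequence $(f_n)$ in $\mathcal C(X)$, if $(f_n)$ is $\mathcal I$-pointwise convergent to $0$ then $(f_n)$ is $\mathcal J$-$\sigma$-uniformly convergent to $0$.
   Context: An ideal on $\omega$ is a family $\mathcal I\subseteq\mathcal P(\omega)$ closed under finite unions and subsets, containing all finite sets, with $\omega\notin\mathcal I$. A real sequence $(a_n)$ is $\mathcal I$-convergent to $0$ if $\{n:|a_n|\ge\varepsilon\}\in\mathcal I$ for all $\varepsilon>0$. For a sequence $(f_n)$ of real functions on a set $X$: $\mathcal I$-pointwise convergence to $0$ means $(f_n(x))$ is $\mathcal I$-convergent to $0$ for each $x$; $\mathcal J$-uniform means $\{n:\exists x\in X\,(|f_n(x)|\ge\varepsilon)\}\in\mathcal J$ for each $\varepsilon>0$; $\mathcal J$-$\sigma$-uniform means $X=\bigcup_{k\in\omega}X_k$ with $(f_n\restriction X_k)$ $\mathcal J$-uniformly convergent to $0$ for each $k$. $\mathcal C(X)$ = continuous real functions on $X$. *)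

From mathcomp Require Import all_boot all_order all_algebra.
From mathcomp Require Import all_classical all_reals all_analysis.
Set Implicit Arguments. Unset Strict Implicit. Unset Printing Implicit Defensive.
Import Order.TTheory GRing.Theory Num.Theory.
Local Open Scope classical_set_scope.
Local Open Scope ring_scope.

Definition is_ideal (I : set (set nat)) : Prop :=
  [/\ (forall A B, I A -> I B -> I (A `|` B)),
      (forall A B, B `<=` A -> I A -> I B),
      (forall A, finite_set A -> I A) &
      ~ I setT].

Definition Iconv0 (R : realType) (I : set (set nat)) (a : nat -> R) : Prop :=
  forall eps : R, 0 < eps -> I [set n | eps <= `|a n|].

Definition Ipointwise0 (R : realType) (X : Type) (I : set (set nat))
    (f : nat -> X -> R) : Prop :=
  forall x : X, Iconv0 I (fun n => f n x).

Definition Juniform0_on (R : realType) (X : Type) (J : set (set nat))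
    (f : nat -> X -> R) (Y : set X) : Prop :=
  forall eps : R, 0 < eps -> J [set n | exists x, Y x /\ eps <= `|f n x|].

Definition Jsigma_uniform0 (R : realType) (X : Type) (J : set (set nat))
    (f : nat -> X -> R) : Prop :=
  exists Xk : nat -> set X,
    \bigcup_k Xk k = setT /\ forall k, Juniform0_on J f (Xk k).

From mathcomp Require Import all_boot all_order all_algebra.
From mathcomp Require Import all_classical all_reals all_analysis.
Set Implicit Arguments. Unset Strict Implicit. Unset Printing Implicit Defensive.
Import Order.TTheory GRing.Theory Num.Theory.
Local Open Scope classical_set_scope.
Local Open Scope ring_scope.

(* Take for X the one-point compactification of the discrete space on all
   but one point of K.  A continuous f on X stays within e of f(oo) off a
   finite set, so X is covered by the points where every f_n agrees with
   f_n(oo) together with, for each k, the finite set of points where some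
   f_n with n <= k is at distance >= 1/(k+1) from f_n(oo).  On the first set
   J-uniform convergence is the J-convergence of (f_n(oo)); on a finite set
   it is a finite union of the sets witnessing pointwise J-convergence. *)

Section Deviation.
Variables (R : realType) (X : Type) (f : nat -> X -> R) (p : X).

Definition agree_set := [set x | forall n, f n x = f n p].

Definition deviation_set (k : nat) :=
  [set x | exists2 n, (n <= k)%N & k.+1%:R^-1 <= `|f n x - f n p|].

Lemma bigcup_agree_deviation :
  \bigcup_k (agree_set `|` deviation_set k) = [set: X].
Proof.
apply/seteqP; split => // x _.
have [agree_x|] := pselect (forall n, f n x = f n p).
  by exists 0%N => //; left.
move=> /existsNP[n /eqP]; rewrite -subr_eq0 -normr_gt0 => d_gt0.
have [m] := ltr_add_invr d_gt0; rewrite add0r => /ltW m_le.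
exists (maxn n m) => //; right; exists n; first exact: leq_maxl.
apply: le_trans m_le; rewrite lef_pV2 ?posrE ?ltr0Sn // ler_nat ltnS.
exact: leq_maxr.
Qed.

Lemma deviation_set_finite :
    (forall n (e : R), 0 < e -> finite_set [set x | e <= `|f n x - f n p|]) ->
  forall k, finite_set (deviation_set k).
Proof.
move=> fin_dev k; apply: sub_finite_set (bigcup_finite (D := `I_k.+1)
  (F := fun n => [set x | k.+1%:R^-1 <= `|f n x - f n p|]) (finite_II _) _).
  by move=> x [n n_le_k dev]; exists n.
by move=> n _; apply: fin_dev; rewrite invr_gt0 ltr0Sn.
Qed.

End Deviation.

Lemma Ipointwise0_sub (R : realType) (X : Type) (I J : set (set nat))
    (f : nat -> X -> R) :
  I `<=` J -> Ipointwise0 I f -> Ipointwise0 J f.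
Proof. by move=> IJ If x eps eps_gt0; apply/IJ/If. Qed.

Section IdealConvergence.
Variables (J : set (set nat)) (hJ : is_ideal J).

Lemma ideal_sub (A B : set nat) : J A -> B `<=` A -> J B.
Proof. by case: hJ => _ sub _ _ JA BA; exact: sub BA JA. Qed.

Lemma ideal_setU (A B : set nat) : J A -> J B -> J (A `|` B).
Proof. by case: hJ => + _ _ _; apply. Qed.

Lemma ideal_finite (A : set nat) : finite_set A -> J A.
Proof. by case: hJ => _ _ + _; apply. Qed.

Lemma ideal_bigcup (T : Type) (Y : set T) (A : T -> set nat) :
  finite_set Y -> (forall x, Y x -> J (A x)) -> J (\bigcup_(x in Y) A x).
Proof.
elim/Pchoice: T => T in Y A *; move=> Yfin JA.
rewrite -bigsetU_fset_set // big_seq; apply: big_ind.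
- exact/ideal_finite/finite_set0.
- exact: @ideal_setU.
- by move=> x; rewrite in_fset_set // inE => /JA.
Qed.

Variables (R : realType) (X : Type) (f : nat -> X -> R).

Lemma Juniform0_on_setU (Y Z : set X) :
  Juniform0_on J f Y -> Juniform0_on J f Z -> Juniform0_on J f (Y `|` Z).
Proof.
move=> fY fZ eps eps_gt0.
apply: (ideal_sub (ideal_setU (fY _ eps_gt0) (fZ _ eps_gt0))).
by move=> n [x [[Yx|Zx] dev]]; [left|right]; exists x.
Qed.

Lemma Juniform0_on_finite (Y : set X) :
  Ipointwise0 J f -> finite_set Y -> Juniform0_on J f Y.
Proof.
move=> fJ Yfin eps eps_gt0.
apply: (ideal_sub (ideal_bigcup (A := fun x => [set n | eps <= `|f n x|]) Yfin _)).
  by move=> x _; apply: fJ.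
by move=> n [x [Yx dev]]; exists x.
Qed.

Lemma Juniform0_on_agree (p : X) :
  Iconv0 J (f^~ p) -> Juniform0_on J f (agree_set f p).
Proof.
move=> fpJ eps eps_gt0; apply: (ideal_sub (fpJ _ eps_gt0)).
by move=> n [x [/= agree_x]]; rewrite agree_x.
Qed.

Lemma Jsigma_uniform0_finite :
  finite_set [set: X] -> Ipointwise0 J f -> Jsigma_uniform0 J f.
Proof.
move=> Xfin fJ; exists (fun=> [set: X]); split.
  by apply/seteqP; split => // x _; exists 0%N.
by move=> _; exact: Juniform0_on_finite.
Qed.

Lemma Jsigma_uniform0_finite_deviation (p : X) :
    (forall n (e : R), 0 < e -> finite_set [set x | e <= `|f n x - f n p|]) ->
  Ipointwise0 J f -> Jsigma_uniform0 J f.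
Proof.
move=> fin_dev fJ; exists (fun k => agree_set f p `|` deviation_set f p k).
split; first exact: bigcup_agree_deviation.
move=> k; apply: Juniform0_on_setU; first exact/Juniform0_on_agree/fJ.
exact/Juniform0_on_finite/deviation_set_finite.
Qed.

End IdealConvergence.

Lemma compact_isolated_finite (T : ptopologicalType) (C : set T) :
  compact C -> (forall x, C x -> open [set x]) -> finite_set C.
Proof.
rewrite compact_cover => Ccover isolated.
have [D _ CD] := Ccover T C (fun x => [set x]) isolated
  (fun x Cx => ex_intro2 _ _ x Cx erefl).
by apply: sub_finite_set (finite_fset D) => x /CD[y /= yD ->].
Qed.

Lemma discrete_locally_compact (T : discreteTopologicalType) :
  locally_compact [set: T].
Proof.
move=> x _; rewrite withinET; exists [set x]; first exact: discrete_set1.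
by split; [exact: compact_set1 | exact: discrete_closed].
Qed.

Section DiscreteCompactification.
Variable K : choiceType.
Let X := one_point_compactification (discrete_topology K).

Lemma discrete_compactification_hausdorff : hausdorff_space X.
Proof.
apply: one_point_compactification_hausdorff; first exact: discrete_locally_compact.
exact: discrete_hausdorff.
Qed.

Lemma continuous_deviation_finite (R : realType) (f : X -> R) (e : R) :
  continuous (f : X -> R^o) -> 0 < e ->
  finite_set [set x | e <= `|f x - f None|].
Proof.
move=> f_cont e_gt0; apply: compact_isolated_finite.
  apply: (subclosed_compact _ one_point_compactification_compact) => //.
  apply: (@preimage_closed _ R^o (fun x => `|f x - f None|) [set r | e <= r]).
    move=> x _; apply: (@continuous_comp _ R^o R^o (fun y => f y - f None) Num.norm).
      by apply: continuousB; [exact: f_cont | exact: cst_continuous].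
    exact: norm_continuous.
  exact: closed_ge.
case=> [y _|] /=; last by rewrite subrr normr0 leNgt e_gt0.
by rewrite -image_set1; exact/one_point_compactification_open_some/discrete_open.
Qed.

End DiscreteCompactification.

Lemma option_val_bijective (K : Type) (k0 : K) :
  bijective (fun o : option {x : K | x <> k0} => if o is Some x then sval x else k0).
Proof.
exists (fun y => if pselect (y = k0) is right y_neq then Some (exist _ y y_neq)
                 else None).
  case=> [[y y_neq]|] /=; last by case: pselect.
  by case: pselect => // y_neq'; congr (Some (exist _ _ _)); exact: Prop_irrelevance.
by move=> y; case: pselect => /= [->|].
Qed.

Theorem theorem6p3 (R : realType) (I J : set (set nat))
  (hI : is_ideal I) (hJ : is_ideal J) (hIJ : I `<=` J) (K : Type) :
  exists (X : topologicalType) (g : X -> K),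
    [/\ bijective g, hausdorff_space X, compact [set: X] &
      forall f : nat -> X -> R,
        (forall n, continuous (f n : X -> R^o)) ->
        Ipointwise0 I f -> Jsigma_uniform0 J f].
Proof.
have [[k0]|K_empty] := pselect (inhabited K); last first.
  have K_fin : finite_set [set: discrete_topology {classic K}].
    by apply: sub_finite_set (finite_set0 _) => x; case: K_empty.
  exists (discrete_topology {classic K}), id; split.
  - by exists id.
  - exact: discrete_hausdorff.
  - exact: finite_compact.
  - by move=> f _ fI; apply: Jsigma_uniform0_finite => //; exact: Ipointwise0_sub fI.
pose X := one_point_compactification
  (discrete_topology {classic {x : K | x <> k0}}).
exists X, (fun o : X => if o is Some x then sval x else k0); split.
- exact: option_val_bijective.
- exact: discrete_compactification_hausdorff.
- exact: one_point_compactification_compact.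
- move=> f f_cont fI; apply: (Jsigma_uniform0_finite_deviation hJ (p := None)).
    by move=> n e; exact: continuous_deviation_finite.
  exact: Ipointwise0_sub fI.
Qed.
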